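(* For every pure state $|\psi\rangle\in\mathcal{H}'$ and every Z$_2$-invariant measurement $\{\mathcal{E}_\mu\}$ such that for each outcome $\mu$ with $w_\mu:=\mathrm{Tr}\,\mathcal{E}_\mu(|\psi\rangle\langle\psi|)>0$ we have $\mathcal{E}_\mu(|\psi\rangle\langle\psi|)=w_\mu|\phi_\mu\rangle\langle\phi_\mu|$ for a pure state $|\phi_\mu\rangle$, $$\sum_\mu w_\mu\,\mathcal{C}(|\phi_\mu\rangle)\le\mathcal{C}(|\psi\rangle).$$ That is, $\mathcal{C}$ is an ensemble Z$_2$-frameness monotone.
   Context: $\mathcal{H}'$ is a two-dimensional Hilbert space with orthonormal basis $|0\rangle,|1\rangle$; $\pi=|0\rangle\langle0|-|1\rangle\langle1|$. A Z$_2$-invariant operation is a completely positive, trace-nonincreasing linear map $\mathcal{E}$ on operators on $\mathcal{H}'$ with $\mathcal{E}(\pi X\pi)=\pi\mathcal{E}(X)\pi$ for all $X$. A Z$_2$-invariant measurement is a (countable) family $\{\mathcal{E}_\mu\}$ of Z$_2$-invariant operations whose sum is trace-preserving. For a pure state $|\chi\rangle\in\mathcal{H}'$, $\mathcal{C}(|\chi\rangle)=2\min\{|\langle0|\chi\rangle|^2,|\langle1|\chi\rangle|^2\}$. *)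

From HB Require Import structures.
From mathcomp Require Import all_boot all_order all_algebra.
From mathcomp Require Import all_classical all_reals.
From mathcomp Require Import ereal topology normedtype sequences.
From mathcomp Require Import complex.
Set Implicit Arguments. Unset Strict Implicit. Unset Printing Implicit Defensive.
Import Order.TTheory GRing.Theory Num.Theory numFieldNormedType.Exports.
Local Open Scope classical_set_scope.
Local Open Scope ring_scope.

Section QubitDefs.
Variable R : realType.
Local Notation C := R[i].

Definition sqmod (z : C) : R := (complex.Re z) ^+ 2 + (complex.Im z) ^+ 2.

(* H' = C^2 with orthonormal basis |0>, |1> (the standard basis);
   vectors are column vectors. *)
Definition pure_state (v : 'cV[C]_2) : Prop :=
  sqmod (v ord0 ord0) + sqmod (v (@Ordinal 2 1 isT) ord0) = 1.

Definition ketbra (v : 'cV[C]_2) : 'M[C]_2 := v *m (map_mx Num.conj v)^T.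

Definition piZ2 : 'M[C]_2 := \matrix_(i < 2, j < 2) if i == j then
  (if i == ord0 then 1 else -1) else 0.

(* Positive semidefiniteness of a block operator on C^n (x) H',
   given by its n x n blocks X a c (operators on H'):
   <v, X v> >= 0 (real nonnegative) for every vector v in C^n (x) C^2. *)
Definition block_psd (n : nat) (X : 'I_n -> 'I_n -> 'M[C]_2) : Prop :=
  forall v : 'I_n -> 'I_2 -> C,
    0 <= \sum_(a < n) \sum_(c < n) \sum_(b < 2) \sum_(d < 2)
           Num.conj (v a b) * X a c b d * v c d.

Definition psd (X : 'M[C]_2) : Prop := block_psd (fun _ _ : 'I_1 => X).

Definition linear_map (E : 'M[C]_2 -> 'M[C]_2) : Prop :=
  forall (a : C) (X Y : 'M[C]_2), E (a *: X + Y) = a *: E X + E Y.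

(* complete positivity: id_n (x) E is positive for every n *)
Definition completely_positive (E : 'M[C]_2 -> 'M[C]_2) : Prop :=
  forall (n : nat) (X : 'I_n -> 'I_n -> 'M[C]_2),
    block_psd X -> block_psd (fun a c => E (X a c)).

Definition trace_nonincreasing (E : 'M[C]_2 -> 'M[C]_2) : Prop :=
  forall X : 'M[C]_2, psd X -> \tr (E X) <= \tr X.

Definition operation (E : 'M[C]_2 -> 'M[C]_2) : Prop :=
  [/\ linear_map E, completely_positive E & trace_nonincreasing E].

Definition Z2_invariant_operation (E : 'M[C]_2 -> 'M[C]_2) : Prop :=
  operation E /\
  forall X : 'M[C]_2, E (piZ2 *m X *m piZ2) = piZ2 *m E X *m piZ2.

(* A (countable) measurement, outcomes indexed by nat (a finite measurement
   is obtained by padding with zero operations): each E mu is a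
   Z2-invariant operation and sum_mu E mu is trace preserving, i.e.
   sum_mu Tr (E mu X) = Tr X for every X (complex series: real and
   imaginary parts converge). *)
Definition Z2_invariant_measurement (E : nat -> 'M[C]_2 -> 'M[C]_2) : Prop :=
  (forall mu, Z2_invariant_operation (E mu)) /\
  forall X : 'M[C]_2,
    (fun n : nat => \sum_(mu < n) complex.Re (\tr (E mu X)))
       @ \oo --> (complex.Re (\tr X) : R) /\
    (fun n : nat => \sum_(mu < n) complex.Im (\tr (E mu X)))
       @ \oo --> (complex.Im (\tr X) : R).

Definition frameness (v : 'cV[C]_2) : R :=
  2 * Num.min (sqmod (v ord0 ord0)) (sqmod (v (@Ordinal 2 1 isT) ord0)).

End QubitDefs.

(* Z2-invariance puts the Choi matrix of each operation E_mu in parity block form: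
   E(|a><a|) is diagonal, with weights w a i, and E(|0><1|) is antidiagonal.
   Writing A i = |psi_0|^2 w 0 i and B i = |psi_1|^2 w 1 i, the output
   E(|psi><psi|) has diagonal A i + B i, and complete positivity bounds its
   coherence by sqrt(A 0 B 1) + sqrt(A 1 B 0).  Purity of the output,
   |M_01|^2 = M_00 M_11, then forces A 0 A 1 = B 0 B 1, whence
   w_mu C(phi_mu) = 2 min(A 0 + B 0, A 1 + B 1) is at most both
   2 |psi_0|^2 Tr E_mu(|0><0|) and 2 |psi_1|^2 Tr E_mu(|1><1|).  Summing over
   mu and using trace preservation gives the bound 2 min(|psi_0|^2, |psi_1|^2). *)

From HB Require Import structures.
From mathcomp Require Import all_boot all_order all_algebra.
From mathcomp Require Import all_classical all_reals.
From mathcomp Require Import ereal topology normedtype sequences.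
From mathcomp Require Import complex.
From mathcomp Require Import ring lra.
Import Order.TTheory GRing.Theory Num.Theory numFieldNormedType.Exports.
Local Open Scope classical_set_scope.
Local Open Scope ring_scope.
Set Implicit Arguments. Unset Strict Implicit.

Section RealInequalities.
Variable R : realFieldType.

Lemma le_mul_of_quadratic_ge0 (P Q q : R) : 0 <= P -> 0 <= Q -> 0 <= q ->
  (forall r, 0 <= P * q * r ^+ 2 - 2 * q * r + Q) -> q <= P * Q.
Proof.
move=> hP hQ hq hquad.
have [->|q_neq0] := eqVneq q 0; first by rewrite mulr_ge0.
have q_gt0 : 0 < q by rewrite lt_def q_neq0 hq.
have [P0|P_neq0] := eqVneq P 0.
  have := hquad ((Q + 1) / (2 * q)); rewrite P0 !mul0r add0r.
  rewrite mulrC -mulrA mulVf ?mulr1 ?mulf_neq0 ?pnatr_eq0 //; lra.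
have P_gt0 : 0 < P by rewrite lt_def P_neq0 hP.
have := hquad P^-1.
have -> : P * q * P^-1 ^+ 2 = q / P by field.
rewrite -ler_pdivrMl //; lra.
Qed.

(* The hypotheses give (A0 + B0)(A1 + B1) <= (sqrt (A0 B1) + sqrt (A1 B0))^2,
   which rearranges to (sqrt (A0 A1) - sqrt (B0 B1))^2 <= 0. *)
Lemma rank_one_balance (A0 A1 B0 B1 s t K : R) :
  0 <= A0 -> 0 <= A1 -> 0 <= B0 -> 0 <= B1 -> 0 <= s -> 0 <= t ->
  s <= A0 * B1 -> t <= A1 * B0 -> K ^+ 2 <= s * t ->
  (A0 + B0) * (A1 + B1) = s + t + 2 * K -> A0 * A1 = B0 * B1.
Proof.
move=> hA0 hA1 hB0 hB1 hs ht hsA htA hK hprod.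
have hsum : A0 * A1 + B0 * B1 <= 2 * K by nra.
have hst : s * t <= (A0 * B1) * (A1 * B0) by apply: ler_pM.
have : (A0 * A1 - B0 * B1) ^+ 2 <= 0.
  have h0 : 0 <= A0 * A1 + B0 * B1 by rewrite addr_ge0 ?mulr_ge0.
  have hsq : (A0 * A1 + B0 * B1) ^+ 2 <= 4 * K ^+ 2 by nra.
  nra.
by move=> h; apply/eqP; rewrite -subr_eq0 -sqrf_eq0 eq_le h sqr_ge0.
Qed.

Lemma min_le_of_mul_eq (A0 A1 B0 B1 : R) :
  0 <= A0 -> 0 <= A1 -> 0 <= B0 -> 0 <= B1 -> A0 * A1 = B0 * B1 ->
  Num.min (A0 + B0) (A1 + B1) <= A0 + A1.
Proof.
move=> hA0 hA1 hB0 hB1 hbal; rewrite ge_min.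
case: (lerP (A0 + B0) (A0 + A1)) => [//| h0].
case: (lerP (A1 + B1) (A0 + A1)) => [|h1]; first by rewrite orbT.
have : A1 * A0 < B0 * B1.
  apply: (le_lt_trans (y := A1 * B1)); first by rewrite ler_wpM2l //; lra.
  by rewrite ltr_pM2r; lra.
lra.
Qed.

End RealInequalities.

Section SquaredModulus.
Variable R : realType.
Local Notation C := R[i].

Lemma sqmod_ge0 (x : C) : 0 <= sqmod x.
Proof. by rewrite addr_ge0 ?sqr_ge0. Qed.

Lemma sqmodM (x y : C) : sqmod (x * y) = sqmod x * sqmod y.
Proof. by case: x => a b; case: y => c d; rewrite /sqmod /=; ring. Qed.

Lemma sqmodJ (x : C) : sqmod x^* = sqmod x.
Proof. by case: x => a b; rewrite /sqmod /=; ring. Qed.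

Lemma mulcJ_sqmod (x : C) : x * x^* = (sqmod x)%:C%C.
Proof. by case: x => a b; apply/eqP; rewrite eq_complex /sqmod /=; apply/andP; split; apply/eqP; ring. Qed.

Lemma sqmodD (x y : C) : sqmod (x + y) = sqmod x + sqmod y + 2 * complex.Re (x * y^*).
Proof. by case: x => a b; case: y => c d; rewrite /sqmod /=; ring. Qed.

Lemma Re_mulJ_sqr_le (x y : C) : complex.Re (x * y^*) ^+ 2 <= sqmod x * sqmod y.
Proof.
rewrite -(sqmodJ y) -sqmodM; case: (x * y^*) => a b.
by rewrite /sqmod /= lerDl sqr_ge0.
Qed.

Lemma psd_form2 (P x y Q : C) :
  (forall s t : C, 0 <= s^* * P * s + s^* * x * t + t^* * y * s + t^* * Q * t) ->
  [/\ 0 <= P, 0 <= Q, y = x^* & sqmod x <= complex.Re P * complex.Re Q].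
Proof.
case: P => Pr Pi; case: x => xr xi; case: y => yr yi; case: Q => Qr Qi /= H.
have HR (a b c d : R) := H (a +i* b)%C (c +i* d)%C.
move: (HR 1 0 0 0) (HR 0 0 1 0) (HR 1 0 1 0) (HR 1 0 0 1).
simpc => /andP[/eqP h1 h1'] /andP[/eqP h2 h2'] /andP[/eqP h3 h3'] /andP[/eqP h4 h4'].
have -> : Pi = 0 by lra.
have -> : Qi = 0 by lra.
have -> : yi = - xi by lra.
have -> : yr = xr by lra.
rewrite eqxx /=.
split => //; try lra.
apply: le_mul_of_quadratic_ge0; rewrite ?sqmod_ge0 //; try lra.
move=> r; move: (HR (- r * xr) (- r * xi) 1 0).
simpc => /andP[_]; rewrite /sqmod /=; nra.
Qed.

End SquaredModulus.

Local Notation i0 := (@ord0 1).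
Local Notation i1 := (@Ordinal 2 1 isT).
Local Notation z0 := (@ord0 0).

Lemma sum_ord2 (V : nmodType) (F : 'I_2 -> V) : \sum_(i < 2) F i = F i0 + F i1.
Proof. by rewrite big_ord_recl big_ord1; congr (_ + F _); apply: val_inj. Qed.

Lemma ord2P (k : 'I_2) : k = i0 \/ k = i1.
Proof. by case: k => [[|[|//]] ?]; [left|right]; apply: val_inj. Qed.

Lemma mxtrace_delta (K : pzSemiRingType) (n : nat) (i : 'I_n) :
  \tr (delta_mx i i : 'M[K]_n) = 1.
Proof.
rewrite /mxtrace (bigD1 i) //= mxE !eqxx big1 ?addr0 // => j /negbTE ji.
by rewrite mxE ji.
Qed.

Section LinearMap.
Variables (R : realType) (E : 'M[R[i]]_2 -> 'M[R[i]]_2).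
Hypothesis linE : linear_map E.

Lemma linear_mapD X Y : E (X + Y) = E X + E Y.
Proof. by have := linE 1 X Y; rewrite !scale1r. Qed.

Lemma linear_mapZ k X : E (k *: X) = k *: E X.
Proof.
have E0 : E 0 = 0 by apply: (addrI (E 0)); rewrite -linear_mapD !addr0.
by have := linE k X 0; rewrite addr0 E0 addr0.
Qed.

End LinearMap.

Section QubitMatrices.
Variable R : realType.
Local Notation C := R[i].

(* The Choi matrix of the identity map, i.e. the projector onto |00> + |11>. *)
Lemma delta_block_psd : block_psd (fun a c : 'I_2 => (delta_mx a c : 'M[C]_2)).
Proof.
move=> v; rewrite !sum_ord2 !mxE /= !mulr0 !mul0r !mulr1 !addr0 !add0r.
rewrite (_ : _ + _ = (v i0 i0 + v i1 i1) * (v i0 i0 + v i1 i1)^*); last first.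
  by rewrite rmorphD /=; ring.
by rewrite mulcJ_sqmod ler0c sqmod_ge0.
Qed.

Lemma block_psd_form_diag (F : 'I_2 -> 'I_2 -> 'M[C]_2) : block_psd F ->
  forall s t : C, 0 <= s^* * F i0 i0 i0 i0 * s + s^* * F i0 i1 i0 i1 * t
                     + t^* * F i1 i0 i1 i0 * s + t^* * F i1 i1 i1 i1 * t.
Proof.
move=> Fpsd s t.
have := Fpsd (fun a b => if a == i0 then (if b == i0 then s else 0)
                                    else (if b == i0 then 0 else t)).
by rewrite !sum_ord2 /= rmorph0 !mulr0 !mul0r !addr0 !add0r -!addrA.
Qed.

Lemma block_psd_form_antidiag (F : 'I_2 -> 'I_2 -> 'M[C]_2) : block_psd F ->
  forall s t : C, 0 <= s^* * F i0 i0 i1 i1 * s + s^* * F i0 i1 i1 i0 * t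
                     + t^* * F i1 i0 i0 i1 * s + t^* * F i1 i1 i0 i0 * t.
Proof.
move=> Fpsd s t.
have := Fpsd (fun a b => if a == i0 then (if b == i1 then s else 0)
                                    else (if b == i0 then t else 0)).
by rewrite !sum_ord2 /= rmorph0 !mulr0 !mul0r !addr0 !add0r -!addrA.
Qed.

Lemma ketbraE (v : 'cV[C]_2) i j : ketbra v i j = v i z0 * (v j z0)^*.
Proof. by rewrite !mxE big_ord1 !mxE. Qed.

Lemma ketbra_scaled_entries (T : R) (phi : 'cV[C]_2) (M : 'M[C]_2) :
  M = T%:C%C *: ketbra phi ->
  (forall i, M i i = (T * sqmod (phi i z0))%:C%C) /\
  sqmod (M i0 i1) = complex.Re (M i0 i0) * complex.Re (M i1 i1).
Proof.
move=> ->.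
have entry i j : (T%:C%C *: ketbra phi) i j = T%:C%C * (phi i z0 * (phi j z0)^*).
  by rewrite mxE ketbraE.
split=> [i|]; rewrite !entry !mulcJ_sqmod -?rmorphM //.
by rewrite !sqmodM sqmodJ /sqmod /=; ring.
Qed.

End QubitMatrices.

Section Z2Operation.
Variables (R : realType) (E : 'M[R[i]]_2 -> 'M[R[i]]_2).
Hypothesis HE : Z2_invariant_operation E.
Local Notation C := R[i].
Local Notation F a c := (E (delta_mx a c)).

Let linE : linear_map E. Proof. by case: HE => -[]. Qed.

Definition parity_sign (i : 'I_2) : C := if i == i0 then 1 else -1.

Lemma parity_signM a c :
  parity_sign a * parity_sign c = if a == c then 1 else -1.
Proof.
by rewrite /parity_sign; case: (ord2P a) => ->; case: (ord2P c) => -> /=; ring.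
Qed.

Lemma piZ2_conjE (M : 'M[C]_2) i j :
  (piZ2 R *m M *m piZ2 R) i j = parity_sign i * parity_sign j * M i j.
Proof.
rewrite !mxE !sum_ord2 !mxE !sum_ord2 !mxE /parity_sign.
by case: (ord2P i) => ->; case: (ord2P j) => -> /=; ring.
Qed.

Lemma choi_parity a c i j : (a == c) != (i == j) -> F a c i j = 0.
Proof.
move=> hpar; have [_ inv] := HE.
have hpi : piZ2 R *m delta_mx a c *m piZ2 R
           = (parity_sign a * parity_sign c) *: delta_mx a c.
  apply/matrixP => k l; rewrite piZ2_conjE !mxE.
  by case: eqP => [->|]; case: eqP => [->|] /=; rewrite ?mulr1 ?mulr0 ?mul0r.
have := congr1 (fun M : 'M[C]_2 => M i j) (inv (delta_mx a c)).
rewrite /= hpi linear_mapZ // piZ2_conjE mxE !parity_signM.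
set e := F a c i j.
have sign_flip : e = - e -> e = 0.
  move=> h; have : e *+ 2 = 0 by rewrite mulr2n {1}h addNr.
  by move/eqP; rewrite mulrn_eq0 /= => /eqP.
move: hpar; case: (a == c); case: (i == j) => //= _.
  by rewrite mul1r mulN1r => /sign_flip.
by rewrite mul1r mulN1r => /esym /sign_flip.
Qed.

Let choi_psd : block_psd (fun a c => F a c).
Proof. by case: HE => -[_ CP _] _; apply: CP; apply: delta_block_psd. Qed.

Lemma choi_form_diag :
  [/\ 0 <= F i0 i0 i0 i0, 0 <= F i1 i1 i1 i1, F i1 i0 i1 i0 = (F i0 i1 i0 i1)^*
    & sqmod (F i0 i1 i0 i1) <= complex.Re (F i0 i0 i0 i0) * complex.Re (F i1 i1 i1 i1)].
Proof. by apply: psd_form2; apply: (block_psd_form_diag choi_psd). Qed.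

Lemma choi_form_antidiag :
  [/\ 0 <= F i0 i0 i1 i1, 0 <= F i1 i1 i0 i0, F i1 i0 i0 i1 = (F i0 i1 i1 i0)^*
    & sqmod (F i0 i1 i1 i0) <= complex.Re (F i0 i0 i1 i1) * complex.Re (F i1 i1 i0 i0)].
Proof. by apply: psd_form2; apply: (block_psd_form_antidiag choi_psd). Qed.

Definition choi_weight (a i : 'I_2) : R := complex.Re (F a a i i).

Lemma choi_diag_ge0 a i : 0 <= F a a i i.
Proof.
have [? ? _ _] := choi_form_diag; have [? ? _ _] := choi_form_antidiag.
by case: (ord2P a) => ->; case: (ord2P i) => ->.
Qed.

Lemma choi_weight_ge0 a i : 0 <= choi_weight a i.
Proof. by have := choi_diag_ge0 a i; rewrite lecE => /andP[]. Qed.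

Lemma choi_diagE a i : F a a i i = (choi_weight a i)%:C%C.
Proof. exact/esym/RRe_real/ger0_real/choi_diag_ge0. Qed.

Lemma Re_trace_choi_diag a :
  complex.Re (\tr (F a a)) = choi_weight a i0 + choi_weight a i1.
Proof. by rewrite /mxtrace sum_ord2 !choi_diagE. Qed.

Section Ketbra.
Variable v : 'cV[C]_2.
Local Notation al := (sqmod (v i0 z0)).
Local Notation be := (sqmod (v i1 z0)).
Local Notation c := (v i0 z0 * (v i1 z0)^*).

Lemma E_ketbra_decomp : E (ketbra v) =
  al%:C%C *: F i0 i0 + be%:C%C *: F i1 i1 + c *: F i0 i1 + c^* *: F i1 i0.
Proof.
have -> : ketbra v = al%:C%C *: delta_mx i0 i0 + be%:C%C *: delta_mx i1 i1
                     + c *: delta_mx i0 i1 + c^* *: delta_mx i1 i0.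
  apply/matrixP => i j; rewrite ketbraE !mxE -!mulcJ_sqmod rmorphM /= conjCK.
  by case: (ord2P i) => ->; case: (ord2P j) => -> /=; ring.
by rewrite !(linear_mapD linE) !(linear_mapZ linE).
Qed.

Lemma E_ketbra_diag i :
  E (ketbra v) i i = (al * choi_weight i0 i + be * choi_weight i1 i)%:C%C.
Proof.
rewrite E_ketbra_decomp !mxE !choi_diagE !choi_parity ?eqxx //= !mulr0 !addr0.
by apply/eqP; simpc.
Qed.

Lemma E_ketbra_offdiag :
  E (ketbra v) i0 i1 = c * F i0 i1 i0 i1 + c^* * (F i0 i1 i1 i0)^*.
Proof.
have [_ _ <- _] := choi_form_antidiag.
rewrite E_ketbra_decomp !mxE (choi_parity (a:=i0) (c:=i0)) ?(choi_parity (a:=i1) (c:=i1)) //.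
by rewrite !mulr0 !add0r.
Qed.

Lemma trace_E_ketbra : \tr (E (ketbra v)) =
  (al * choi_weight i0 i0 + be * choi_weight i1 i0
   + (al * choi_weight i0 i1 + be * choi_weight i1 i1))%:C%C.
Proof. by rewrite /mxtrace sum_ord2 !E_ketbra_diag -rmorphD. Qed.

End Ketbra.

Section Outcome.
Variables psi phi : 'cV[C]_2.
Hypothesis pure_output : 0 < \tr (E (ketbra psi)) ->
  pure_state phi /\ E (ketbra psi) = \tr (E (ketbra psi)) *: ketbra phi.
Local Notation A i := (sqmod (psi i0 z0) * choi_weight i0 i).
Local Notation B i := (sqmod (psi i1 z0) * choi_weight i1 i).

Lemma outcome_parts_ge0 i : 0 <= A i /\ 0 <= B i.
Proof. by rewrite !mulr_ge0 ?sqmod_ge0 ?choi_weight_ge0. Qed.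

Lemma outcome_zero : ~~ (0 < \tr (E (ketbra psi))) ->
  [/\ A i0 = 0, A i1 = 0, B i0 = 0 & B i1 = 0].
Proof.
rewrite trace_E_ketbra // ltcR -leNgt => T_le0.
have [[? ?] [? ?]] := (outcome_parts_ge0 i0, outcome_parts_ge0 i1).
by split; lra.
Qed.

Lemma outcome_pure_entries : 0 < \tr (E (ketbra psi)) ->
  (forall i, A i + B i = complex.Re (\tr (E (ketbra psi))) * sqmod (phi i z0)) /\
  sqmod (E (ketbra psi) i0 i1) = (A i0 + B i0) * (A i1 + B i1).
Proof.
move=> T_gt0; have [_ Eout] := pure_output T_gt0.
rewrite trace_E_ketbra // in Eout *.
have [diag rank1] := ketbra_scaled_entries Eout.
split=> [i|]; first by have := diag i; rewrite E_ketbra_diag // => -[].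
by rewrite rank1 !E_ketbra_diag.
Qed.

Lemma outcome_balance : A i0 * A i1 = B i0 * B i1.
Proof.
have [T_gt0|T_le0] := boolP (0 < \tr (E (ketbra psi))); last first.
  by have [-> -> -> ->] := outcome_zero T_le0; rewrite mulr0.
have [_] := outcome_pure_entries T_gt0.
rewrite E_ketbra_offdiag // sqmodD.
set c := psi i0 z0 * (psi i1 z0)^*; set x := F i0 i1 i0 i1; set y := F i0 i1 i1 i0.
move=> hprod.
have [_ _ _ x_le] := choi_form_diag; have [_ _ _ y_le] := choi_form_antidiag.
have albe_ge0 : 0 <= sqmod (psi i0 z0) * sqmod (psi i1 z0) by rewrite mulr_ge0 ?sqmod_ge0.
have [[? ?] [? ?]] := (outcome_parts_ge0 i0, outcome_parts_ge0 i1).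
have sqmod_c : sqmod c = sqmod (psi i0 z0) * sqmod (psi i1 z0) by rewrite sqmodM sqmodJ.
apply: (rank_one_balance (s := sqmod (c * x)) (t := sqmod (c^* * y^*))
         (K := complex.Re (c * x * (c^* * y^*)^*)));
  rewrite ?sqmod_ge0 ?Re_mulJ_sqr_le ?hprod // !sqmodM !sqmodJ ?sqmod_c.
all: by rewrite mulrACA ler_wpM2l.
Qed.

Lemma outcome_weighted_frameness :
  complex.Re (\tr (E (ketbra psi))) * frameness phi
  = 2 * Num.min (A i0 + B i0) (A i1 + B i1).
Proof.
have [T_gt0|T_le0] := boolP (0 < \tr (E (ketbra psi))); last first.
  have [A0 A1 B0 B1] := outcome_zero T_le0.
  by rewrite trace_E_ketbra // A0 A1 B0 B1 !addr0 minxx mul0r mulr0.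
have [entries _] := outcome_pure_entries T_gt0.
have T_ge0 : 0 <= complex.Re (\tr (E (ketbra psi))).
  by move: T_gt0; rewrite ltcE => /andP[_ /ltW].
by rewrite !entries /frameness mulrCA minr_pMr.
Qed.

Lemma outcome_weighted_frameness_ge0 :
  0 <= complex.Re (\tr (E (ketbra psi))) * frameness phi.
Proof.
have [[? ?] [? ?]] := (outcome_parts_ge0 i0, outcome_parts_ge0 i1).
by rewrite outcome_weighted_frameness mulr_ge0 // le_min !addr_ge0.
Qed.

Lemma outcome_frameness_le a :
  complex.Re (\tr (E (ketbra psi))) * frameness phi
  <= 2 * sqmod (psi a z0) * complex.Re (\tr (F a a)).
Proof.
have [[? ?] [? ?]] := (outcome_parts_ge0 i0, outcome_parts_ge0 i1).
rewrite outcome_weighted_frameness Re_trace_choi_diag // -mulrA ler_wpM2l // mulrDr.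
case: (ord2P a) => ->; first exact: min_le_of_mul_eq outcome_balance.
rewrite (addrC (A i0)) (addrC (A i1)).
exact: min_le_of_mul_eq (esym outcome_balance).
Qed.

End Outcome.
End Z2Operation.

Lemma partial_sum_le_lim (R : realType) (u : nat -> R) (l : R) :
  (forall n, 0 <= u n) -> (fun n => \sum_(k < n) u k) @ \oo --> l ->
  forall n, \sum_(k < n) u k <= l.
Proof.
move=> u_ge0 cvg_u n; rewrite -(cvg_lim _ cvg_u) //.
apply: nondecreasing_cvgn_le; last exact: cvgP cvg_u.
move=> p q pq; rewrite -!(big_mkord xpredT).
exact: (nondecreasing_series (fun k _ _ => u_ge0 k)).
Qed.

Theorem lemma11 (R : realType) (psi : 'cV[R[i]]_2)
    (E : nat -> 'M[R[i]]_2 -> 'M[R[i]]_2) (phi : nat -> 'cV[R[i]]_2) :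
  pure_state psi ->
  Z2_invariant_measurement E ->
  (forall mu : nat, 0 < \tr (E mu (ketbra psi)) ->
     pure_state (phi mu) /\
     E mu (ketbra psi) = \tr (E mu (ketbra psi)) *: ketbra (phi mu)) ->
  (\sum_(0 <= mu <oo)
      ((complex.Re (\tr (E mu (ketbra psi))) * frameness (phi mu))%:E)
     <= (frameness psi)%:E)%E.
Proof.
move=> _ [E_Z2 E_tp] pure_out.
set f := fun mu => complex.Re (\tr (E mu (ketbra psi))) * frameness (phi mu).
have f_ge0 mu : 0 <= f mu := outcome_weighted_frameness_ge0 (E_Z2 mu) (pure_out mu).
have partial_le a n : \sum_(mu < n) f mu <= 2 * sqmod (psi a z0).
  have weight_ge0 mu : 0 <= complex.Re (\tr (E mu (delta_mx a a))).
    by rewrite (Re_trace_choi_diag (E_Z2 mu)) addr_ge0 ?choi_weight_ge0.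
  have := partial_sum_le_lim weight_ge0 (E_tp (delta_mx a a)).1 n.
  rewrite mxtrace_delta /= => weights_le1.
  have term_le (mu : 'I_n) : f mu <= 2 * sqmod (psi a z0) * complex.Re (\tr (E mu (delta_mx a a))).
    exact: (outcome_frameness_le (E_Z2 mu) (pure_out mu) a).
  apply: le_trans (ler_sum _ (fun mu _ => term_le mu)) _.
  by rewrite -mulr_sumr -[leRHS]mulr1 ler_wpM2l ?mulr_ge0 ?sqmod_ge0.
apply: lime_le; first by apply: is_cvg_nneseries => n _ _; rewrite lee_fin; apply: f_ge0.
apply: nearW => n; rewrite sumEFin lee_fin big_mkord /frameness.
by case: (leP (sqmod (psi i0 z0)) (sqmod (psi i1 z0))) => _; apply: partial_le.
Qed.
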